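(* Let $L\ge 2$. (i) Every triangulation of $[0,1]^L$ induced by a generic fitness landscape whose fitness graph is a Haldane graph has $2^{L-1}$ isolated genotypes. (ii) For $L\ge 3$, no generic fitness landscape whose fitness graph is a Haldane graph induces a staircase triangulation. (iii) For every $L$, there exists a generic fitness landscape whose fitness graph is a Haldane graph and which induces a corner-cut triangulation.
   Context: Genotypes $g\in\{0,1\}^L$ are vertices of $[0,1]^L$. The triangulation induced by $w:\{0,1\}^L\to\mathbb{R}_{\ge 0}$ is the regular subdivision of $[0,1]^L$ obtained by projecting the upper faces of $\mathrm{conv}\{(g,w_g)\}$; $w$ is generic if all $w_g$ are distinct and this subdivision is a triangulation. The fitness graph directs each cube edge toward the genotype of higher fitness; a peak is a genotype with all neighbours of lower fitness. A Haldane graph is a fitness graph with the maximal possible number $2^{L-1}$ of peaks. A genotype $g$ is isolated (in a triangulation) if there is no genotype $g'$ at Hamming distance $2$ from $g$ such that $g,g'$ belong to a common simplex. A corner simplex consists of a vertex and its $L$ Hamming neighbours; a corner-cut triangulation is one having $2^{L-1}$ corner simplices. The standard staircase triangulation consists of the $L!$ simplices formed by the genotypes along a walk from $0\cdots0$ to $1\cdots1$ in which each step changes one $0$ to a $1$; a staircase triangulation is its image under any cube symmetry (coordinate permutations and bit flips). *)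

From HB Require Import structures.
From mathcomp Require Import all_boot all_order all_algebra all_fingroup.
Set Implicit Arguments. Unset Strict Implicit. Unset Printing Implicit Defensive.
Import Order.TTheory GRing.Theory Num.Theory.
Local Open Scope ring_scope.

(* Genotypes g in {0,1}^L, seen as vertices of the cube [0,1]^L. *)
Definition geno (L : nat) := {ffun 'I_L -> bool}.

Definition hamming L (g g' : geno L) : nat := #|[set i | g i != g' i]|.

Definition affv (R : numDomainType) L (a : 'I_L -> R) (b : R) (g : geno L) : R :=
  \sum_(i < L) a i * (g i)%:R + b.

(* S affinely spans R^L: the only affine function vanishing on S is zero *)
Definition affine_spanning (R : numDomainType) L (S : {set geno L}) : Prop :=
  forall (c : 'I_L -> R) (d : R),
    (forall g, g \in S -> affv c d g = 0) -> (forall i, c i = 0) /\ d = 0.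

(* S is a maximal cell of the regular subdivision induced by w: the set of
   vertices of a full-dimensional upper face of conv{(g, w g)}, i.e. the
   vertices on which some affine function lying weakly above w is attained,
   the face projecting to a full-dimensional polytope. *)
Definition cell (R : numDomainType) L (w : geno L -> R) (S : {set geno L}) : Prop :=
  exists (a : 'I_L -> R) (b : R),
    (forall g, w g <= affv a b g) /\
    (forall g, g \in S <-> w g = affv a b g) /\
    affine_spanning R S.

(* generic: distinct values, and the subdivision is a triangulation
   (every maximal cell is a simplex, i.e. has L+1 vertices) *)
Definition generic (R : numDomainType) L (w : geno L -> R) : Prop :=
  injective w /\ forall S, cell w S -> #|S| = L.+1.

Definition nonneg (R : numDomainType) L (w : geno L -> R) : Prop :=
  forall g, 0 <= w g.

Definition peak (R : numDomainType) L (w : geno L -> R) (g : geno L) : bool :=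
  [forall g' : geno L, (hamming g g' == 1)%N ==> (w g' < w g)].

(* the fitness graph of w is a Haldane graph: it has 2^(L-1) peaks *)
Definition haldane (R : numDomainType) L (w : geno L -> R) : Prop :=
  #|[set g | peak w g]| = (2 ^ L.-1)%N.

Definition card_prop (T : finType) (P : T -> Prop) (n : nat) : Prop :=
  exists A : {set T}, #|A| = n /\ forall x, x \in A <-> P x.

Definition isolated (R : numDomainType) L (w : geno L -> R) (g : geno L) : Prop :=
  ~ exists g' : geno L, hamming g g' = 2%N /\
      exists S, cell w S /\ g \in S /\ g' \in S.

Definition corner L (v : geno L) : {set geno L} :=
  v |: [set g | hamming v g == 1%N].

Definition corner_cut (R : numDomainType) L (w : geno L -> R) : Prop :=
  card_prop (fun S : {set geno L} => cell w S /\ exists v, S = corner v)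
            (2 ^ L.-1)%N.

(* standard staircase simplex for a permutation s: the genotypes along the
   walk 0..0 -> 1..1 flipping coordinates s 0, s 1, ..., s (L-1) in order;
   the k-th vertex has bit i set iff i is among s 0, ..., s (k-1). *)
Definition std_simplex L (s : {perm 'I_L}) : {set geno L} :=
  [set [ffun i => ((s^-1)%g i < k)%N] | k : 'I_L.+1].

Definition cube_sym L (p : {perm 'I_L}) (f : geno L) (g : geno L) : geno L :=
  [ffun i => g (p i) (+) f i].

Definition staircase (R : numDomainType) L (w : geno L -> R) : Prop :=
  exists (p : {perm 'I_L}) (f : geno L),
    forall S, cell w S <->
      exists s : {perm 'I_L}, S = [set cube_sym p f g | g in std_simplex s].

From HB Require Import structures.
From mathcomp Require Import all_boot all_order all_algebra all_fingroup.
From mathcomp Require Import zify ring lra.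
From Stdlib Require Import Classical.
Set Implicit Arguments. Unset Strict Implicit. Unset Printing Implicit Defensive.
Import Order.TTheory GRing.Theory Num.Theory.
Local Open Scope ring_scope.

(* In a Haldane landscape the peaks form one parity class of the cube, so every
   edge joins a peak to a non-peak.  A non-peak g shares no cell with a genotype
   g' at distance 2: if h, h' are the two other vertices of their square and f
   is an affine function supporting w with equality at g and g', then
   f g + f g' = f h + f h' >= w h + w h' > w g + w g', since h and h' are peaks.
   A peak g does share a cell with the peak g' at distance 2: the affine
   function equal to w at g and g', to their mean at h and h', and huge off the
   square supports w, and lowering a supporting function until its contact set
   spans yields a cell.  This gives (i), and also (ii): a staircase simplex
   contains a monotone walk of length 3, and one of its first two vertices is a
   non-peak at distance 2 from a later one.
   For (iii), let w g = 4 [g even] + t ^ n(g) with n injective: the corners at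
   odd vertices are cells, those at even vertices are not, and outside the roots
   of finitely many nonzero polynomials in t no affine function agrees with w on
   L + 2 genotypes, so the subdivision is a triangulation. *)

Section Cube.
Variable L : nat.
Implicit Types (g h v x : geno L) (i j k : 'I_L).

Definition flip i g : geno L := [ffun k => g k (+) (k == i)].

Definition even_geno g := ~~ odd #|[set k | g k]|.

Lemma flipE i g k : flip i g k = g k (+) (k == i).
Proof. by rewrite ffunE. Qed.

Lemma flipK i : involutive (flip i).
Proof. by move=> g; apply/ffunP=> k; rewrite !flipE addbK. Qed.

Lemma flip_inj i : injective (flip i).
Proof. exact: inv_inj (flipK i). Qed.

Lemma flipC i j g : flip i (flip j g) = flip j (flip i g).
Proof. by apply/ffunP=> k; rewrite !flipE addbAC. Qed.

Lemma flip_neq i g k : (flip i g k != g k) = (k == i).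
Proof. by rewrite flipE; case: (g k); case: (k == i). Qed.

Lemma flip2_neq i j g k : i != j ->
  (flip i (flip j g) k != g k) = (k == i) || (k == j).
Proof.
move=> ij; rewrite !flipE; case: (k =P i) => [->|_]; last by case: (g k); case: (k == j).
by rewrite (negbTE ij); case: (g i).
Qed.

Lemma hammingC g h : hamming g h = hamming h g.
Proof. by apply: eq_card => k; rewrite !inE eq_sym. Qed.

Lemma hamming_flip i g : hamming g (flip i g) = 1%N.
Proof.
rewrite /hamming (_ : [set _ | _] = [set i]) ?cards1 //.
by apply/setP=> k; rewrite !inE eq_sym flip_neq.
Qed.

Lemma hamming_flip2 i j g : i != j -> hamming g (flip i (flip j g)) = 2%N.
Proof.
move=> ij; rewrite /hamming (_ : [set _ | _] = [set i; j]) ?cards2 ?ij //.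
by apply/setP=> k; rewrite !inE eq_sym (flip2_neq g k ij).
Qed.

Lemma hammingxx g : hamming g g = 0%N.
Proof. by apply/eqP; rewrite cards_eq0; apply/eqP/setP => k; rewrite !inE eqxx. Qed.

Lemma hamming_eq0 g h : hamming g h = 0%N -> g = h.
Proof.
move/eqP; rewrite cards_eq0 => /eqP/setP eq_gh; apply/ffunP=> k.
by apply/eqP; move: (eq_gh k); rewrite !inE => /negbFE.
Qed.

Lemma hamming1P g h : hamming g h = 1%N -> exists i, h = flip i g.
Proof.
move/eqP/cards1P=> [i /setP diff_i]; exists i; apply/ffunP=> k.
by move: (diff_i k); rewrite !inE flipE; case: (k == i); case: (g k); case: (h k).
Qed.

Lemma hamming2P g h : hamming g h = 2%N ->
  exists i j, i != j /\ h = flip i (flip j g).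
Proof.
move/eqP/cards2P=> [i [j [ij /setP diff_ij]]]; exists i, j; split=> //.
apply/ffunP=> k; apply/eqP; move: (diff_ij k); rewrite !inE -(flip2_neq g k ij).
by case: (g k); case: (h k); case: (flip _ _ k).
Qed.

Lemma even_geno_flip i g : even_geno (flip i g) = ~~ even_geno g.
Proof.
rewrite /even_geno negbK; case gi: (g i).
- have -> : [set k | flip i g k] = [set k | g k] :\ i.
    by apply/setP=> k; rewrite !inE flipE; case: (k =P i) => [->|_]; rewrite ?eqxx ?gi ?addbF ?orbF.
  by rewrite (cardsD1 i [set k | g k]) inE gi add1n /=.
- have -> : [set k | flip i g k] = i |: [set k | g k].
    by apply/setP=> k; rewrite !inE flipE; case: (k =P i) => [->|_]; rewrite ?eqxx ?gi ?addbF ?orbF.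
  by rewrite cardsU1 inE gi /= add0n negbK.
Qed.

Lemma card_geno : #|{: geno L}| = (2 ^ L)%N.
Proof. by rewrite card_ffun card_bool card_ord. Qed.

Lemma card_geno_halves : (0 < L)%N -> #|{: geno L}| = (2 ^ L.-1 + 2 ^ L.-1)%N.
Proof. by move=> L_gt0; rewrite card_geno addnn -mul2n -expnS prednK. Qed.

Lemma card_flip_setC i (P : {set geno L}) : flip i @: P = ~: P -> #|P| = (2 ^ L.-1)%N.
Proof.
move=> flipP; have card_PC : #|~: P| = #|P| by rewrite -flipP card_imset //; exact: flip_inj.
have := cardsC P; rewrite card_PC card_geno_halves ?(leq_ltn_trans _ (ltn_ord i)) //.
by move: (2 ^ L.-1)%N => n; lia.
Qed.

Lemma card_setC_half (P : {set geno L}) : (0 < L)%N -> #|P| = (2 ^ L.-1)%N ->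
  #|~: P| = (2 ^ L.-1)%N.
Proof.
move=> L_gt0 cardP; have := cardsC P; rewrite card_geno_halves // cardP.
by move: (2 ^ L.-1)%N => n; lia.
Qed.

Lemma card_even_geno i : #|[set g | even_geno g]| = (2 ^ L.-1)%N.
Proof.
apply: (@card_flip_setC i [set g | even_geno g]); apply/setP=> g; rewrite !inE; apply/imsetP/idP.
  by case=> h; rewrite inE => even_h ->; rewrite even_geno_flip even_h.
by move=> odd_g; exists (flip i g); rewrite ?flipK // inE even_geno_flip.
Qed.

Lemma face2P i j v x : i != j -> (forall k, k \notin [set i; j] -> x k = v k) ->
  [\/ x = v, x = flip i v, x = flip j v | x = flip i (flip j v)].
Proof.
move=> ij off_face.
have xE k : x k = v k (+) ((k == i) && (x i != v i)) (+) ((k == j) && (x j != v j)).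
  case: (k =P i) => [->|/eqP ki]; first by rewrite (negbTE ij) addbF; case: (x i); case: (v i).
  case: (k =P j) => [->|/eqP kj]; first by case: (x j); case: (v j).
  by rewrite !addbF off_face // !inE negb_or ki kj.
case: (x i != v i) xE; case: (x j != v j) => xE;
  [apply: Or44 | apply: Or42 | apply: Or43 | apply: Or41];
  by apply/ffunP => k; rewrite xE ?flipE ?andbT ?andbF ?addbF // addbAC.
Qed.

Lemma flip2_off_face i j v k : k \notin [set i; j] -> flip i (flip j v) k = v k.
Proof. by rewrite !inE negb_or !flipE => /andP[/negbTE-> /negbTE->]; rewrite !addbF. Qed.

Lemma mem_corner v : v \in corner v.
Proof. by rewrite !inE eqxx. Qed.

Lemma mem_corner_flip i v : flip i v \in corner v.
Proof. by rewrite !inE hamming_flip eqxx orbT. Qed.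

End Cube.

Section AffineFunctions.
Variables (R : numDomainType) (L : nat).
Implicit Types (g v x : geno L) (a c D : 'I_L -> R) (b d : R) (i j : 'I_L).

Lemma affv_comb a b c d t g :
  affv (fun k => a k + t * c k) (b + t * d) g = affv a b g + t * affv c d g.
Proof.
rewrite /affv mulrDr big_distrr addrACA -big_split /=; congr (_ + _).
by apply: eq_bigr => k _; rewrite mulrDl mulrA.
Qed.

Lemma affv_opp c d g : affv (fun k => - c k) (- d) g = - affv c d g.
Proof. by rewrite /affv opprD -sumrN; congr (_ + _); apply: eq_bigr => k _; rewrite mulNr. Qed.

Lemma affv_square a b g i j : i != j ->
  affv a b g + affv a b (flip i (flip j g)) = affv a b (flip i g) + affv a b (flip j g).
Proof.
move=> ij; rewrite /affv addrACA [RHS]addrACA -!big_split /=; congr (_ + _).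
apply: eq_bigr => k _; rewrite !flipE -!mulrDr; congr (_ * _).
case: (k =P i) => [->|_]; first by rewrite (negbTE ij); case: (g i); rewrite /= ?addr0 ?add0r.
by case: (k == j); case: (g k); rewrite /= ?addr0 ?add0r // addrC.
Qed.

Lemma affv_flip c d i v :
  affv c d (flip i v) = affv c d v + c i * (if v i then -1 else 1).
Proof.
rewrite /affv (bigD1 i) //= [in RHS](bigD1 i) //= flipE eqxx addbT.
rewrite (eq_bigr (fun k => c k * (v k)%:R)); last by move=> k /negbTE ki; rewrite flipE ki addbF.
by case: (v i) => /=; ring.
Qed.

Lemma affv_weights v b0 D :
  exists a b, forall x, affv a b x = b0 + \sum_k D k * (x k != v k)%:R.
Proof.
exists (fun k => if v k then - D k else D k), (b0 + \sum_k (if v k then D k else 0)).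
move=> x; rewrite /affv addrCA -big_split; congr (_ + _); apply: eq_bigr => k _.
by case: (v k); case: (x k) => /=; ring.
Qed.

Lemma sum_weights_flip D i v : \sum_k D k * (flip i v k != v k)%:R = D i.
Proof.
rewrite (bigD1 i) //= flip_neq eqxx mulr1 big1 ?addr0 // => k /negbTE ki.
by rewrite flip_neq ki mulr0.
Qed.

Lemma sum_weights_flip2 D i j v : i != j ->
  \sum_k D k * (flip i (flip j v) k != v k)%:R = D i + D j.
Proof.
move=> ij; have ji : j != i by rewrite eq_sym.
rewrite (bigD1 i) //= (bigD1 j) ?ji //= !flip2_neq // (negbTE ji) !eqxx orbT /= !mulr1.
rewrite big1 ?addr0 ?addrA // => k /andP[ki kj].
by rewrite flip2_neq // (negbTE ki) (negbTE kj) mulr0.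
Qed.

Lemma hamming_sum v x : (hamming v x)%:R = \sum_k (x k != v k)%:R :> R.
Proof.
rewrite /hamming -sum1_card natr_sum big_mkcond /=; apply: eq_bigr => k _.
by rewrite inE eq_sym; case: (_ != _).
Qed.

Lemma corner_spanning v : affine_spanning R (corner v).
Proof.
move=> c d vanish; have at_v : affv c d v = 0 by apply: vanish; apply: mem_corner.
have c_eq0 i : c i = 0.
  have /eqP := vanish _ (mem_corner_flip i v).
  rewrite affv_flip at_v add0r mulf_eq0 => /orP[/eqP //|].
  by case: (v i); rewrite ?oppr_eq0 oner_eq0.
split=> //; move: at_v; rewrite /affv big1 ?add0r // => k _.
by rewrite c_eq0 mul0r.
Qed.

End AffineFunctions.

Lemma linear_relation (F : fieldType) (T : finType) (E : {set T}) m (u : T -> 'I_m -> F) :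
  (m < #|E|)%N ->
  exists lam : T -> F, (exists2 g, g \in E & lam g != 0) /\
    forall j, \sum_(g in E) lam g * u g j = 0.
Proof.
move=> m_lt_E; have [g0 g0E] : exists g0, g0 \in E.
  by apply/set0Pn; rewrite -card_gt0 (leq_ltn_trans _ m_lt_E).
pose A : 'M[F]_(#|E|, m) := \matrix_(r, j) u (enum_val r) j.
have ker_neq0 : kermx A != 0.
  rewrite kermx_eq0 /row_free; apply: contraTneq (rank_leq_col A) => ->.
  by rewrite -ltnNge.
have /existsP[[r c] /= Krc] : [exists rc : 'I_#|E| * 'I_#|E|, kermx A rc.1 rc.2 != 0].
  apply: contraNT ker_neq0 => /existsPn none; apply/eqP/matrixP => r c.
  by rewrite [RHS]mxE; have := none (r, c); rewrite negbK => /eqP.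
pose lam g := if g \in E then kermx A r (enum_rank_in g0E g) else 0.
have lamE s : lam (enum_val s) = kermx A r s by rewrite /lam enum_valP enum_valK_in.
exists lam; split; first by exists (enum_val c); [exact: enum_valP | rewrite lamE].
move=> j; rewrite big_enum_val /=.
move/matrixP/(_ r j): (mulmx_ker A); rewrite !mxE => ker_rj; rewrite -[RHS]ker_rj.
by apply: eq_bigr => s _; rewrite lamE [A s j]mxE.
Qed.

Section AffineDependence.
Variables (R : numFieldType) (L : nat).

(* The lift (g, 1) of g to R^(L+1); [ord_max] indexes the constant coordinate. *)
Definition homog (g : geno L) (j : 'I_L.+1) : R :=
  oapp (fun k => (g k)%:R) 1 (unlift ord_max j).

Lemma oapp_unlift (f : 'I_L.+1 -> R) j :
  oapp (fun k => f (lift ord_max k)) (f ord_max) (unlift ord_max j) = f j.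
Proof. by case: (unliftP ord_max j) => [k ->|->]; rewrite ?liftK ?unlift_none. Qed.

Lemma affv_homog (a : 'I_L -> R) b g :
  affv a b g = \sum_(j < L.+1) oapp a b (unlift ord_max j) * homog g j.
Proof.
rewrite big_ord_recr /= /homog unlift_none /= mulr1; congr (_ + _).
apply: eq_bigr => k _; rewrite (_ : widen_ord _ k = lift ord_max k) ?liftK //.
by apply: val_inj; rewrite [RHS]lift_max.
Qed.

Lemma affine_spanning_card (S : {set geno L}) : affine_spanning R S -> (L.+1 <= #|S|)%N.
Proof.
move=> spanS; rewrite leqNgt; apply/negP => S_small.
have [|lam [[j _ lam_j] rel]] :=
  @linear_relation R _ [set: 'I_L.+1] _ (fun j (s : 'I_#|S|) => homog (enum_val s) j).
  by rewrite cardsT card_ord.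
have vanish g : g \in S -> affv (fun k => lam (lift ord_max k)) (lam ord_max) g = 0.
  move=> gS; rewrite affv_homog -[RHS](rel (enum_rank_in gS g)).
  by apply: eq_big => [i|i _]; rewrite ?inE // oapp_unlift enum_rankK_in.
have [c_eq0 d_eq0] := spanS _ _ vanish.
by move: lam_j; case: (unliftP ord_max j) => [k ->|->]; rewrite ?c_eq0 ?d_eq0 eqxx.
Qed.

Lemma affine_relation (E : {set geno L}) : (L.+1 < #|E|)%N ->
  exists lam : geno L -> R, (exists2 g, g \in E & lam g != 0) /\
    forall a b, \sum_(g in E) lam g * affv a b g = 0.
Proof.
move=> E_big; have [lam [nz rel]] := linear_relation (fun g j => homog g j) E_big.
exists lam; split=> // a b.
under eq_bigr => g _ do rewrite affv_homog mulr_sumr.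
rewrite exchange_big big1 //= => j _.
under eq_bigr => g _ do rewrite mulrCA.
by rewrite -mulr_sumr rel mulr0.
Qed.

End AffineDependence.

Section Cells.
Variables (R : realFieldType) (L : nat) (w : geno L -> R).
Implicit Types (g v x : geno L) (a c D : 'I_L -> R) (b d : R).

Definition supports a b := forall g, w g <= affv a b g.

Definition contact a b := [set g | w g == affv a b g].

Lemma cell_contact a b :
  supports a b -> affine_spanning R (contact a b) -> cell w (contact a b).
Proof. by move=> sup span; exists a, b; do !split=> //; rewrite inE => /eqP. Qed.

Lemma nonspanning_witness (E : {set geno L}) : ~ affine_spanning R E ->
  exists c d, (forall g, g \in E -> affv c d g = 0) /\ exists g1, affv c d g1 < 0.
Proof.
rewrite /affine_spanning => /not_all_ex_not[c] /not_all_ex_not[d] not_zero.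
have [vanish nonzero] := imply_to_and _ _ not_zero.
have [g1 g1_neq0] : exists g1, affv c d g1 != 0.
  apply: NNPP => none; apply: nonzero.
  apply: (corner_spanning (v := [ffun=> false])) => g _.
  by apply/eqP; apply: contra_notT none => g_neq0; exists g.
move: g1_neq0; rewrite neq_lt => /orP[neg|pos].
  by exists c, d; split=> //; exists g1.
exists (fun k => - c k), (- d); split; last by exists g1; rewrite affv_opp oppr_lt0.
by move=> g gE; rewrite affv_opp vanish ?oppr0.
Qed.

(* Tilt along an affine function that vanishes on the contact set and is
   negative somewhere, as far as the tilted function stays above w. *)
Lemma support_tilt a b : supports a b -> ~ affine_spanning R (contact a b) ->
  exists a' b', supports a' b' /\ contact a b \proper contact a' b'.
Proof.
move=> sup /nonspanning_witness[c [d [vanish [g1 g1_neg]]]].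
pose N := [set g | affv c d g < 0].
pose r g := (affv a b g - w g) / - affv c d g.
have [gs gsN r_min] : exists2 gs, gs \in N & forall g, g \in N -> r gs <= r g.
  have g1N : g1 \in N by rewrite inE.
  by case: (Order.TotalTheory.arg_minP r g1N) => gs gsN r_min; exists gs.
have gs_neg : affv c d gs < 0 by rewrite inE in gsN.
pose t := r gs.
have t_ge0 : 0 <= t by rewrite divr_ge0 ?subr_ge0 ?oppr_ge0 ?(ltW gs_neg).
exists (fun k => a k + t * c k), (b + t * d); split.
  move=> g; rewrite affv_comb; case: (ltP (affv c d g) 0) => [g_neg|g_nneg].
    have := r_min g; rewrite inE => /(_ g_neg); rewrite ler_pdivlMr ?oppr_gt0 //.
    by rewrite mulrN -/t; lra.
  by rewrite (le_trans (sup g)) // lerDl mulr_ge0.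
rewrite properE; apply/andP; split.
  apply/subsetP => g gE; rewrite inE affv_comb vanish // mulr0 addr0.
  by rewrite inE in gE.
apply/subsetPn; exists gs; rewrite inE.
  by rewrite affv_comb /t /r; apply/eqP; field; rewrite lt_eqF.
apply: contraTN gs_neg => /eqP contact_gs.
by rewrite vanish ?ltxx // inE contact_gs.
Qed.

Lemma cell_of_support a b : supports a b -> exists2 S, cell w S & contact a b \subset S.
Proof.
move=> sup; have [n] := ubnP #|~: contact a b|.
elim: n => // n IH in a b sup *; rewrite ltnS => le_n.
case: (classic (affine_spanning R (contact a b))) => [span|nspan].
  by exists (contact a b); [exact: cell_contact | exact: subxx].
have [a' [b' [sup' lt_contact]]] := support_tilt sup nspan.
have [|S cellS sub'] := IH a' b' sup'.
  by apply: leq_trans le_n; apply: proper_card; rewrite properC.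
by exists S => //; apply: subset_trans sub'; apply: proper_sub.
Qed.

(* Off the face the weights are so large that the function exceeds w there. *)
Lemma face_support v (I : {set 'I_L}) b0 D :
  (forall x, (forall k, k \notin I -> x k = v k) ->
     w x <= b0 + \sum_k D k * (x k != v k)%:R) ->
  exists a b, supports a b /\ forall x, (forall k, k \notin I -> x k = v k) ->
     affv a b x = b0 + \sum_k D k * (x k != v k)%:R.
Proof.
move=> face_le; pose M := \sum_y `|w y| + \sum_k `|D k| + `|b0| + 1.
have M_gt0 : 0 < M by rewrite ltr_wpDl ?addr_ge0 ?sumr_ge0.
pose D' k := if k \in I then D k else M.
have [a [b affvE]] := affv_weights v b0 D'.
have on_faceE x : (forall k, k \notin I -> x k = v k) ->
    \sum_k D' k * (x k != v k)%:R = \sum_k D k * (x k != v k)%:R.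
  move=> on_face; apply: eq_bigr => k _; rewrite /D'.
  by case: (boolP (k \in I)) => // kI; rewrite on_face // eqxx !mulr0.
exists a, b; split => [x|x /on_faceE <-//]; rewrite affvE.
case: (boolP [forall k, (k \notin I) ==> (x k == v k)]) => [/forall_inP on_face|].
  have {}on_face k : k \notin I -> x k = v k by move/on_face/eqP.
  by rewrite on_faceE // face_le.
case/forall_inPn => k0 k0I xk0.
have term_ge k : M * (k == k0)%:R - `|D k| <= D' k * (x k != v k)%:R.
  rewrite /D'; case: (k =P k0) => [->|_]; first by rewrite (negbTE k0I) xk0 !mulr1 gerBl.
  rewrite mulr0 sub0r; case: (k \in I); case: (x k != v k);
    by rewrite ?mulr1 ?mulr0 ?(lerNnormlW (lexx _)) ?(le_trans _ (ltW M_gt0)) // oppr_le0.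
have : \sum_k (M * (k == k0)%:R - `|D k|) <= \sum_k D' k * (x k != v k)%:R.
  by apply: ler_sum => k _; exact: term_ge.
rewrite sumrB (bigD1 k0) //= eqxx mulr1 big1 ?addr0 => [sum_ge|k /negbTE->]; last by rewrite mulr0.
have w_le : w x <= \sum_y `|w y|.
  by rewrite (le_trans (ler_norm _)) // (bigD1 x) //= lerDl sumr_ge0.
have := lerNnormlW (lexx `|b0|); rewrite /M in sum_ge; lra.
Qed.

End Cells.

Section HaldaneLandscapes.
Variables (R : realFieldType) (L : nat) (w : geno L -> R).
Hypothesis haldane_w : haldane w.
Implicit Types (g h x : geno L) (i j : 'I_L).

Lemma peak_lt g h : peak w g -> hamming g h = 1%N -> w h < w g.
Proof. by move=> /forallP/(_ h)/implyP pg gh; apply: pg; rewrite gh. Qed.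

Lemma peak_nbr_nonpeak g h : peak w g -> hamming g h = 1%N -> ~~ peak w h.
Proof.
move=> pg gh; apply/negP => ph.
by have := lt_trans (peak_lt pg gh) (peak_lt ph (etrans (hammingC h g) gh)); rewrite ltxx.
Qed.

Lemma peak_flip i g : peak w (flip i g) = ~~ peak w g.
Proof.
set P := [set g | peak w g].
have flipP : flip i @: P = ~: P.
  apply/eqP; rewrite eqEcard card_imset; last exact: flip_inj.
  rewrite card_setC_half ?haldane_w ?(leq_ltn_trans _ (ltn_ord i)) // leqnn andbT.
  apply/subsetP => _ /imsetP[h hP ->]; rewrite !inE.
  by apply: peak_nbr_nonpeak (hamming_flip i h); rewrite inE in hP.
move/setP/(_ (flip i g)): flipP; rewrite mem_imset; last exact: flip_inj.
by rewrite !inE => ->; rewrite negbK.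
Qed.

Lemma nonpeak_isolated g : ~~ peak w g -> isolated w g.
Proof.
move=> npg [_ [/hamming2P[i [j [ij ->]]] [S [[a [b [sup [contactS _]]]] [gS g'S]]]]].
have lt_i : w g < w (flip i g).
  by apply: peak_lt; rewrite ?peak_flip // hammingC hamming_flip.
have lt_j : w (flip i (flip j g)) < w (flip j g).
  by apply: peak_lt; rewrite ?peak_flip // hamming_flip.
have := affv_square a b g ij; rewrite -(proj1 (contactS _) gS) -(proj1 (contactS _) g'S).
by have := sup (flip i g); have := sup (flip j g); lra.
Qed.

Lemma peak_not_isolated g : (2 <= L)%N -> peak w g -> ~ isolated w g.
Proof.
move=> L_ge2 pg; apply.
pose i : 'I_L := Ordinal (ltnW L_ge2); pose j : 'I_L := Ordinal L_ge2.
have ij : i != j by [].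
pose g' := flip i (flip j g).
have pg' : peak w g' by rewrite !peak_flip negbK.
have lt_gi : w (flip i g) < w g by apply: peak_lt pg _; exact: hamming_flip.
have lt_gj : w (flip j g) < w g by apply: peak_lt pg _; exact: hamming_flip.
have lt_g'i : w (flip i g) < w g'.
  by rewrite -[flip i g](flipK j) -flipC; apply: peak_lt pg' _; exact: hamming_flip.
have lt_g'j : w (flip j g) < w g'.
  by rewrite -[flip j g](flipK i); apply: peak_lt pg' _; exact: hamming_flip.
pose del := (w g' - w g) / 2.
have [|a [b [sup on_face]]] := @face_support _ _ w g [set i; j] (w g) (fun=> del).
  move=> x /(face2P ij)[->|->|->|->]; rewrite ?sum_weights_flip ?sum_weights_flip2 //.
  - by rewrite big1 ?addr0 // => k _; rewrite eqxx mulr0.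
  - by rewrite /del; lra.
  - by rewrite /del; lra.
  - by rewrite /del; lra.
have [S cellS sub] := cell_of_support sup.
exists g'; split; first exact: hamming_flip2.
exists S; split=> //; split; apply: (subsetP sub); rewrite inE on_face //.
- by rewrite big1 ?addr0 // => k _; rewrite eqxx mulr0.
- by rewrite sum_weights_flip2 // /del; apply/eqP; field.
- by move=> k; exact: flip2_off_face.
Qed.

Lemma haldane_isolated_card : (2 <= L)%N -> card_prop (isolated w) (2 ^ L.-1)%N.
Proof.
move=> L_ge2; exists (~: [set g | peak w g]); split.
  by apply: card_setC_half; [exact: ltnW | exact: haldane_w].
move=> g; rewrite !inE; split; first exact: nonpeak_isolated.
by apply: contraPN => pg; exact: peak_not_isolated.
Qed.

End HaldaneLandscapes.

Section Staircase.
Variable L : nat.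

Definition walk (n : nat) : geno L := [ffun i : 'I_L => (i < n)%N].

Lemma walkS (i : 'I_L) : walk i.+1 = flip i (walk i).
Proof.
apply/ffunP => k; rewrite flipE !ffunE ltnS leq_eqVlt val_eqE.
by case: (k =P i) => [->|_]; rewrite ?ltnn ?addbF.
Qed.

Lemma hamming_walk2 n : (n.+2 <= L)%N -> hamming (walk n) (walk n.+2) = 2%N.
Proof.
move=> n_lt; pose i : 'I_L := Ordinal (ltnW n_lt); pose j : 'I_L := Ordinal n_lt.
have -> : walk n.+2 = flip j (flip i (walk n)) by rewrite -(walkS i) -(walkS j).
by apply: hamming_flip2; rewrite -val_eqE /= eqn_leq ltnn.
Qed.

Lemma walk_mem_std_simplex (k : 'I_L.+1) : walk k \in std_simplex 1%g.
Proof. by apply/imsetP; exists k => //; apply/ffunP => i; rewrite !ffunE invg1 perm1. Qed.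

Lemma hamming_cube_sym (p : {perm 'I_L}) f x y :
  hamming (cube_sym p f x) (cube_sym p f y) = hamming x y.
Proof.
rewrite /hamming -[RHS](card_preimset _ (@perm_inj _ p)); apply: eq_card => i.
by rewrite !inE !ffunE; case: (f i); case: (x _); case: (y _).
Qed.

Lemma haldane_not_staircase (R : realFieldType) (w : geno L -> R) :
  (3 <= L)%N -> haldane w -> ~ staircase w.
Proof.
move=> L_ge3 haldane_w [p [f cells]].
set S := [set cube_sym p f g | g in std_simplex 1%g].
pose u n := cube_sym p f (walk n).
have cellS : cell w S by apply/cells; exists 1%g.
have not_isolated n : (n.+2 <= L)%N -> ~ isolated w (u n).
  move=> n_lt; apply; exists (u n.+2); split; first by rewrite hamming_cube_sym hamming_walk2.
  have mem_u m : (m <= L)%N -> u m \in S.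
    by move=> m_le; apply: imset_f; exact: (walk_mem_std_simplex (Ordinal (m_le : (m < L.+1)%N))).
  by exists S; do !split=> //; apply: mem_u; lia.
have u01 : hamming (u 0) (u 1) = 1%N.
  by rewrite hamming_cube_sym (walkS (Ordinal (ltnW (ltnW L_ge3)))) hamming_flip.
case pu0: (peak w (u 0)).
  exact: not_isolated 1 L_ge3 (nonpeak_isolated haldane_w (peak_nbr_nonpeak pu0 u01)).
exact: not_isolated 0 (ltnW L_ge3) (nonpeak_isolated haldane_w (negbT pu0)).
Qed.

End Staircase.

Section ParityLandscape.
Variables (R : realFieldType) (L : nat) (t : R).
Hypotheses (t_gt0 : 0 < t) (t_lt1 : t < 1).
Implicit Types (g h v x : geno L).

(* Shifted by one so that the monomial [t ^+ geno_index g] never merges with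
   the constant term of [parity_poly g]. *)
Definition geno_index g : nat := (enum_rank g).+1.

Lemma geno_index_inj : injective geno_index.
Proof. by move=> g h /succn_inj/val_inj/enum_rank_inj. Qed.

Definition parity_landscape g : R := 4 * (even_geno g)%:R + t ^+ geno_index g.

Local Notation pl := parity_landscape.

Lemma parity_landscape_even g : even_geno g -> 4 < pl g <= 5.
Proof.
move=> ev_g; rewrite /pl ev_g mulr1.
have := exprn_gt0 (geno_index g) t_gt0; have := exprn_ile1 (geno_index g) (ltW t_gt0) (ltW t_lt1).
by move: (t ^+ _) => y y_le1 y_gt0; apply/andP; split; lra.
Qed.

Lemma parity_landscape_odd g : ~~ even_geno g -> 0 < pl g <= 1.
Proof.
move=> /negbTE odd_g; rewrite /pl odd_g mulr0 add0r exprn_gt0 //.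
exact: exprn_ile1 (ltW t_gt0) (ltW t_lt1).
Qed.

Lemma parity_landscape_ge0 : nonneg pl.
Proof.
move=> g; case: (boolP (even_geno g)) => [/parity_landscape_even|/parity_landscape_odd];
  by case/andP => lt _; apply/ltW/(le_lt_trans _ lt).
Qed.

Lemma parity_landscape_inj : injective pl.
Proof.
move=> g h eq_gh; suff ev_gh : even_geno g = even_geno h.
  move: eq_gh; rewrite /pl ev_gh => /addrI.
  by move/(ieexprIn t_gt0 (negbT (lt_eqF t_lt1)))/geno_index_inj.
case ev_g: (even_geno g); case ev_h: (even_geno h) => //.
  have /andP[gt4 _] := parity_landscape_even ev_g.
  by have /andP[_ le1] := parity_landscape_odd (negbT ev_h); lra.
have /andP[gt4 _] := parity_landscape_even ev_h.
by have /andP[_ le1] := parity_landscape_odd (negbT ev_g); lra.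
Qed.

Lemma parity_landscape_flip_lt g i : even_geno g -> pl (flip i g) + 3 < pl g.
Proof.
move=> ev_g; have /andP[gt4 _] := parity_landscape_even ev_g.
have odd_flip : ~~ even_geno (flip i g) by rewrite even_geno_flip ev_g.
by have /andP[_ le1] := parity_landscape_odd odd_flip; lra.
Qed.

Lemma peak_parity_landscape g : (0 < L)%N -> peak pl g = even_geno g.
Proof.
move=> L_gt0; case ev_g: (even_geno g).
  apply/forallP => h; apply/implyP => /eqP/hamming1P[i ->].
  by have := parity_landscape_flip_lt i ev_g; have := parity_landscape_ge0 (flip i g); lra.
apply/negbTE/negP => /forallP/(_ (flip (Ordinal L_gt0) g))/implyP.
rewrite hamming_flip eqxx => /(_ isT).
have ev_flip : even_geno (flip (Ordinal L_gt0) g) by rewrite even_geno_flip ev_g.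
have := parity_landscape_flip_lt (Ordinal L_gt0) ev_flip; rewrite flipK.
by have := parity_landscape_ge0 g; lra.
Qed.

Lemma haldane_parity_landscape : (0 < L)%N -> haldane pl.
Proof.
move=> L_gt0; rewrite /haldane -(card_even_geno (Ordinal L_gt0)).
by apply: eq_card => g; rewrite !inE peak_parity_landscape.
Qed.

Lemma odd_corner_cell v : ~~ even_geno v -> cell pl (corner v).
Proof.
move=> odd_v; pose D k := pl (flip k v) - pl v.
have D_gt3 k : 3 < D k.
  have ev_flip : even_geno (flip k v) by rewrite even_geno_flip.
  by have := parity_landscape_flip_lt k ev_flip; rewrite flipK /D; lra.
have [a [b affvE]] := affv_weights v (pl v) D.
have at_v : pl v = affv a b v by rewrite affvE big1 ?addr0 // => k _; rewrite eqxx mulr0.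
have at_flip i : pl (flip i v) = affv a b (flip i v).
  by rewrite affvE sum_weights_flip /D addrC subrK.
have far x : (2 <= hamming v x)%N -> pl x < affv a b x.
  move=> far_x; rewrite affvE.
  have : 3 * (hamming v x)%:R <= \sum_k D k * (x k != v k)%:R.
    rewrite hamming_sum mulr_sumr; apply: ler_sum => k _.
    by rewrite ler_wpM2r ?ler0n ?ltW.
  have : 2%:R <= (hamming v x)%:R :> R by rewrite ler_nat.
  have /andP[pl_v_gt0 _] := parity_landscape_odd odd_v.
  have : pl x <= 5.
    by case: (boolP (even_geno x)) => [/parity_landscape_even|/parity_landscape_odd]/andP[]; lra.
  by lra.
have cases x : [\/ x = v, exists i, x = flip i v | (2 <= hamming v x)%N].
  case hx: (hamming v x) => [|[|n]]; first by apply: Or31; rewrite (hamming_eq0 hx).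
    by apply: Or32; exact: hamming1P.
  by apply: Or33.
have contactE : corner v = contact pl a b.
  apply/setP => x; rewrite !inE; case: (cases x) => [->|[i ->]|far_x].
  - by rewrite eqxx at_v eqxx.
  - by rewrite hamming_flip eqxx orbT at_flip eqxx.
  rewrite (lt_eqF (far x far_x)) gtn_eqF // orbF.
  by apply: contraTF far_x => /eqP ->; rewrite hammingxx.
rewrite contactE; apply: cell_contact => [x|]; last by rewrite -contactE; exact: corner_spanning.
by case: (cases x) => [->|[i ->]|/far/ltW //]; rewrite ?at_v ?at_flip.
Qed.

Lemma even_corner_not_cell v : (2 <= L)%N -> even_geno v -> ~ cell pl (corner v).
Proof.
move=> L_ge2 ev_v [a [b [sup [contactS _]]]].
pose i : 'I_L := Ordinal (ltnW L_ge2); pose j : 'I_L := Ordinal L_ge2.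
have on_corner x : x \in corner v -> pl x = affv a b x by move/contactS.
have := @affv_square _ _ a b v i j isT.
rewrite -(on_corner v) ?mem_corner // -!(on_corner (flip _ v)) ?mem_corner_flip //.
have /andP[gt4 _] := parity_landscape_even ev_v.
have odd_flip k : ~~ even_geno (flip k v) by rewrite even_geno_flip ev_v.
have /andP[_ le1_i] := parity_landscape_odd (odd_flip i).
have /andP[_ le1_j] := parity_landscape_odd (odd_flip j).
by have := sup (flip i (flip j v)); have := parity_landscape_ge0 (flip i (flip j v)); lra.
Qed.

Lemma corner_cut_parity_landscape : (2 <= L)%N -> corner_cut pl.
Proof.
move=> L_ge2; pose i : 'I_L := Ordinal (ltnW L_ge2).
exists [set corner v | v in ~: [set v | even_geno v]]; split.
  rewrite card_in_imset ?card_setC_half ?(card_even_geno i) ?(ltnW L_ge2) //.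
  move=> v v'; rewrite !inE => odd_v odd_v' eq_corner.
  have : v' \in corner v by rewrite eq_corner mem_corner.
  rewrite !inE => /orP[/eqP // | /eqP/hamming1P[k v'E]].
  by move: odd_v'; rewrite v'E even_geno_flip odd_v.
move=> S; split.
  by case/imsetP => v; rewrite !inE => odd_v ->; split; [exact: odd_corner_cell | exists v].
case=> cellS [v Sv]; apply/imsetP; exists v => //; rewrite !inE.
by apply: contraPN cellS => /(even_corner_not_cell L_ge2); rewrite Sv.
Qed.

End ParityLandscape.

Lemma exists_common_nonroot (R : realFieldType) (T : finType) (P : T -> R -> Prop) :
  (forall x, exists2 q : {poly R}, q != 0 & forall t, ~~ root q t -> P x t) ->
  exists t, 0 < t < 1 /\ forall x, P x t.
Proof.
case/fin_all_exists2 => q q_neq0 qP; pose Q := \prod_x q x.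
have Q_neq0 : Q != 0 by apply/prodf_neq0 => x _.
pose ts := mkseq (fun k => k.+2%:R^-1 : R) (size Q).
have ts_uniq : uniq ts by apply: mkseq_uniq => m n /invr_inj/eqP; rewrite eqr_nat => /eqP[].
have /allPn[_ /mapP[k _ ->] nroot] : ~~ all (root Q) ts.
  by apply/negP => /(max_poly_roots Q_neq0)/(_ ts_uniq); rewrite size_mkseq ltnn.
exists k.+2%:R^-1; split; first by rewrite invr_gt0 ltr0n invf_lt1 ?ltr0n ?ltr1n.
move=> x; apply: qP; apply: contra nroot => root_qx.
by rewrite /Q (bigD1 x) //= rootM root_qx.
Qed.

Section GenericParameter.
Variables (R : realFieldType) (L : nat).

Definition parity_poly (g : geno L) : {poly R} := (4 * (even_geno g)%:R)%:P + 'X^(geno_index g).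

Lemma horner_parity_poly g t : (parity_poly g).[t] = parity_landscape t g.
Proof. by rewrite hornerD hornerC hornerXn. Qed.

Lemma coef_parity_poly_index g h : (parity_poly g)`_(geno_index h) = (g == h)%:R.
Proof. by rewrite coefD coefC coefXn add0r (inj_eq (@geno_index_inj L)) eq_sym. Qed.

Lemma exists_generic_parameter : exists t : R, 0 < t < 1 /\
  forall E : {set geno L}, (L.+1 < #|E|)%N ->
    forall a b, ~ (forall g, g \in E -> parity_landscape t g = affv a b g).
Proof.
apply: exists_common_nonroot => E.
case: (ltnP L.+1 #|E|) => [E_big | E_small]; last first.
  by exists 1; [exact: oner_neq0 | move=> t].
have [lam [[g0 g0E lam_g0] rel]] := affine_relation R E_big.
exists (\sum_(g in E) lam g *: parity_poly g).
  apply: contraNneq lam_g0 => /(congr1 (fun q : {poly R} => q`_(geno_index g0))).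
  rewrite coef0 coef_sum (bigD1 g0) //= big1 => [|g /andP[_ /negbTE g_neq]].
    by rewrite coefZ coef_parity_poly_index eqxx mulr1 addr0 => <-.
  by rewrite coefZ coef_parity_poly_index g_neq mulr0.
move=> t nroot _ a b agree; move: nroot; rewrite /root horner_sum.
under eq_bigr => g gE do rewrite hornerZ horner_parity_poly agree //.
by rewrite rel eqxx.
Qed.

End GenericParameter.

Lemma exists_haldane_corner_cut (R : realFieldType) L : (2 <= L)%N ->
  exists w : geno L -> R, nonneg w /\ generic w /\ haldane w /\ corner_cut w.
Proof.
move=> L_ge2; have [t [/andP[t_gt0 t_lt1] no_overlap]] := exists_generic_parameter R L.
exists (parity_landscape t); split; first exact: parity_landscape_ge0.
split; last split.
- split=> [|S [a [b [sup [contactS span]]]]]; first exact: parity_landscape_inj.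
  apply/eqP; rewrite eqn_leq (affine_spanning_card span) andbT leqNgt; apply/negP => S_big.
  by apply: (no_overlap S S_big a b) => g /contactS.
- exact: haldane_parity_landscape (ltnW L_ge2).
- exact: corner_cut_parity_landscape.
Qed.

Theorem mainTheorem8 (R : realFieldType) (L : nat) (hL : (2 <= L)%N) :
  (* (i) *)
  (forall w : geno L -> R, nonneg w -> generic w -> haldane w ->
     card_prop (isolated w) (2 ^ L.-1)%N) /\
  (* (ii) *)
  ((3 <= L)%N -> forall w : geno L -> R, nonneg w -> generic w -> haldane w ->
     ~ staircase w) /\
  (* (iii) *)
  (exists w : geno L -> R, nonneg w /\ generic w /\ haldane w /\ corner_cut w).
Proof.
split; first by move=> w _ _ haldane_w; exact: haldane_isolated_card.
split; first by move=> L_ge3 w _ _; exact: haldane_not_staircase.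
exact: exists_haldane_corner_cut.
Qed.
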